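(* Let $R\subseteq\mathbb{R}^d$ and let $y$ lie in the relative interior of $\operatorname{conv}R$. Then for every $x\in R$ there exists an affinely independent set $S\subseteq R$ with at most $d+1$ points such that $x\in S$ and $y$ lies in the relative interior of $\operatorname{conv} S$.
   Context: $\operatorname{conv}$ denotes convex hull; relative interior is the interior relative to the affine hull. *)

(* Points of R^d are row vectors 'rV[K]_d over an arbitrary
   real (ordered) field K; the paper's case is K = the real numbers. *)
From HB Require Import structures.
From mathcomp Require Import all_boot all_order all_algebra.
Set Implicit Arguments. Unset Strict Implicit. Unset Printing Implicit Defensive.
Import Order.TTheory GRing.Theory Num.Theory.
Local Open Scope ring_scope.

Definition conv (K : realFieldType) (d : nat) (A : 'rV[K]_d -> Prop)
  : 'rV[K]_d -> Prop :=
  fun y => exists (n : nat) (x : 'I_n -> 'rV[K]_d) (l : 'I_n -> K),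
    (forall i, A (x i)) /\ (forall i, 0 <= l i) /\ (\sum_i l i = 1) /\
    y = \sum_i l i *: x i.

Definition aff (K : realFieldType) (d : nat) (A : 'rV[K]_d -> Prop)
  : 'rV[K]_d -> Prop :=
  fun y => exists (n : nat) (x : 'I_n -> 'rV[K]_d) (l : 'I_n -> K),
    (forall i, A (x i)) /\ (\sum_i l i = 1) /\ y = \sum_i l i *: x i.

(* Sup norm on 'rV_d (equivalent to the Euclidean norm for topology). *)
Definition supnorm (K : realFieldType) (d : nat) (v : 'rV[K]_d) : K :=
  \big[Num.max/0]_(i < d) `|v 0 i|.

Definition relint (K : realFieldType) (d : nat) (C : 'rV[K]_d -> Prop)
  : 'rV[K]_d -> Prop :=
  fun y => C y /\ exists eps : K, 0 < eps /\
    forall z, aff C z -> supnorm (z - y) < eps -> C z.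

Definition aff_indep (K : realFieldType) (d : nat) (s : seq 'rV[K]_d) : Prop :=
  forall c : 'I_(size s) -> K,
    \sum_i c i = 0 -> \sum_i c i *: s`_i = 0 -> forall i, c i = 0.

(* Since y is relatively interior, it can be pushed slightly beyond itself away
   from x while staying in conv R; hence y is a convex combination of points of
   R in which x carries a positive weight.  A Caratheodory reduction (move along
   an affine dependence until some weight other than that of x vanishes) keeps x
   and produces affinely independent points, at most d + 1 of them, with all
   weights positive.  Positive barycentric coordinates on an affinely independent
   family depend Lipschitz-continuously on the point of its affine hull, so they
   stay positive nearby: y is in the relative interior of their hull. *)

From HB Require Import structures.
From mathcomp Require Import all_boot all_order all_algebra.
From Stdlib Require Import Classical.
Set Implicit Arguments. Unset Strict Implicit. Unset Printing Implicit Defensive.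
Import Order.TTheory GRing.Theory Num.Theory.
Local Open Scope ring_scope.

Section AffineFamilies.
Variables (K : realFieldType) (d : nat).
Notation V := 'rV[K]_d.

Definition affine_free n (f : 'I_n -> V) := forall c : 'I_n -> K,
  \sum_i c i = 0 -> \sum_i c i *: f i = 0 -> forall i, c i = 0.

Definition anchored_comb (y : V) n (f : 'I_n.+1 -> V) (w : 'I_n.+1 -> K) :=
  [/\ (forall i, 0 <= w i), 0 < w ord0, \sum_i w i = 1 & y = \sum_i w i *: f i].

Lemma sum_eq0_exists_gt0 n (c : 'I_n -> K) i :
  \sum_k c k = 0 -> c i != 0 -> exists j, 0 < c j.
Proof.
move=> c0 ci; case: (boolP [exists j, 0 < c j]) => [/existsP //|/existsPn cle0].
have cN0 k : 0 <= - c k by rewrite oppr_ge0 leNgt cle0.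
have := @psumr_eq0P _ _ xpredT (fun k => - c k) (fun k _ => cN0 k).
by rewrite sumrN c0 oppr0 => /(_ erefl i isT) /eqP; rewrite oppr_eq0 (negbTE ci).
Qed.

Lemma affine_dependence n (f : 'I_n.+1 -> V) : ~ affine_free f ->
  exists c : 'I_n.+1 -> K, [/\ \sum_k c k = 0, \sum_k c k *: f k = 0,
    c ord0 <= 0 & exists j, 0 < c j].
Proof.
move=> nfree.
have [c [c0 cf [i ci]]] : exists c : 'I_n.+1 -> K,
    [/\ \sum_k c k = 0, \sum_k c k *: f k = 0 & exists i, c i != 0].
  apply: NNPP => nodep; apply: nfree => c c0 cf i; apply: NNPP => ci.
  by apply: nodep; exists c; split=> //; exists i; apply/eqP.
case: (leP (c ord0) 0) => c0le.
  by exists c; split=> //; exact: sum_eq0_exists_gt0 ci.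
have Nc0 : \sum_k - c k = 0 by rewrite sumrN c0 oppr0.
exists (fun k => - c k); split=> //.
- by under eq_bigr do rewrite scaleNr; rewrite sumrN cf oppr0.
- by rewrite oppr_le0 ltW.
by apply: (sum_eq0_exists_gt0 (i := i)); rewrite ?oppr_eq0.
Qed.

(* Subtracting the largest multiple of the dependence c that keeps the weights
   nonnegative zeroes a weight; the first weight can only grow as c ord0 <= 0. *)
Lemma anchored_comb_shift y n (f : 'I_n.+1 -> V) w (c : 'I_n.+1 -> K) j :
  anchored_comb y f w -> \sum_k c k = 0 -> \sum_k c k *: f k = 0 ->
  c ord0 <= 0 -> 0 < c j -> exists w' j', anchored_comb y f w' /\ w' j' = 0.
Proof.
move=> [w_ge0 w0 w1 yE] c0 cf c0le cj.
have [j' cj' jmin] := @arg_minP _ K _ j (fun k => 0 < c k) (fun k => w k / c k) cj.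
set s := w j' / c j'.
have s_ge0 : 0 <= s by rewrite divr_ge0 ?w_ge0 ?ltW.
exists (fun k => w k - s * c k), j'; split; last by rewrite /s divfK ?subrr ?gt_eqF.
split.
- move=> k; rewrite subr_ge0; case: (ltP 0 (c k)) => ck.
    by rewrite -ler_pdivlMr // jmin.
  by apply: le_trans (w_ge0 k); rewrite mulr_ge0_le0.
- by rewrite subr_gt0; apply: le_lt_trans w0; rewrite mulr_ge0_le0.
- by rewrite sumrB -mulr_sumr c0 mulr0 subr0.
- under eq_bigr do rewrite scalerBl -scalerA.
  by rewrite sumrB -scaler_sumr cf scaler0 subr0.
Qed.

Lemma lift_ord0_neq0 n (j : 'I_n.+2) : j != ord0 -> lift j ord0 = ord0.
Proof. by case: j => [[|j] ?] // _; apply: val_inj. Qed.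

Lemma anchored_comb_zero_neq0 y n (f : 'I_n.+1 -> V) w j :
  anchored_comb y f w -> w j = 0 -> j != ord0.
Proof. by move=> [_ w0 _ _] wj; apply/eqP => j0; move: w0; rewrite -j0 wj ltxx. Qed.

Lemma anchored_comb_drop y n (f : 'I_n.+2 -> V) w j :
  anchored_comb y f w -> w j = 0 -> anchored_comb y (f \o lift j) (w \o lift j).
Proof.
move=> hw wj; have j0 := anchored_comb_zero_neq0 hw wj; case: hw => w_ge0 w0 w1 yE.
split=> //=; first by rewrite lift_ord0_neq0.
  by move: w1; rewrite (bigD1_ord j) //= wj add0r.
by move: yE; rewrite (bigD1_ord j) //= wj scale0r add0r.
Qed.

Lemma anchored_comb_reduce y n (f : 'I_n.+1 -> V) w : anchored_comb y f w ->
  (affine_free f /\ forall i, 0 < w i) \/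
  exists w' j, anchored_comb y f w' /\ w' j = 0.
Proof.
move=> hw; case: (boolP [exists j, w j == 0]) => [/existsP [j /eqP wj]|/existsPn wN0].
  by right; exists w, j.
have w_gt0 i : 0 < w i by case: hw => w_ge0 _ _ _; rewrite lt_def wN0 w_ge0.
case: (classic (affine_free f)) => [free|/affine_dependence [c [c0 cf c0le [j cj]]]].
  by left.
by right; exact: anchored_comb_shift hw c0 cf c0le cj.
Qed.

Lemma caratheodory_anchored (P : V -> Prop) y n (f : 'I_n.+1 -> V) w :
  (forall i, P (f i)) -> anchored_comb y f w ->
  exists m (g : 'I_m.+1 -> V) (mu : 'I_m.+1 -> K),
    [/\ (forall i, P (g i)), g ord0 = f ord0, affine_free g,
        (forall i, 0 < mu i) & \sum_i mu i = 1 /\ y = \sum_i mu i *: g i].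
Proof.
elim: n f w => [|n IH] f w Pf hw;
  case: (anchored_comb_reduce hw) => [[free w_gt0]|[w' [j [hw' w'j]]]].
- by exists 0%N, f, w; case: hw.
- by move: (anchored_comb_zero_neq0 hw' w'j); rewrite (ord1 j) eqxx.
- by exists n.+1, f, w; case: hw.
have [m [g [mu [Pg g0 free mu_gt0 muE]]]] :=
  IH _ _ (fun i => Pf (lift j i)) (anchored_comb_drop hw' w'j).
exists m, g, mu; split=> //.
by rewrite g0 /= lift_ord0_neq0 // (anchored_comb_zero_neq0 hw').
Qed.

Lemma affine_free_inj n (g : 'I_n -> V) : affine_free g -> injective g.
Proof.
move=> free i j gij; apply: NNPP => /eqP ij.
pose c k : K := (k == i)%:R - (k == j)%:R.
have sum_delta (F : 'I_n -> V) k0 : \sum_k (k == k0)%:R *: F k = F k0.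
  rewrite (bigD1 k0) //= eqxx scale1r big1 ?addr0 // => k /negbTE ->.
  by rewrite scale0r.
have sum_delta1 k0 : \sum_k (k == k0)%:R = 1 :> K.
  by rewrite (bigD1 k0) //= eqxx big1 ?addr0 // => k /negbTE ->.
have c0 : \sum_k c k = 0 by rewrite sumrB !sum_delta1 subrr.
have cg : \sum_k c k *: g k = 0.
  by under eq_bigr do rewrite scalerBl; rewrite sumrB !sum_delta gij subrr.
by have /eqP := free c c0 cg i; rewrite /c eqxx (negbTE ij) subr0 oner_eq0.
Qed.

Definition diffmx m (g : 'I_m.+1 -> V) : 'M[K]_(m, d) :=
  \matrix_(i < m) (g (lift ord0 i) - g ord0).

Lemma mul_row_diffmx m (g : 'I_m.+1 -> V) (b : 'rV[K]_m) :
  b *m diffmx g = \sum_i b 0 i *: g (lift ord0 i) - (\sum_i b 0 i) *: g ord0.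
Proof.
rewrite mulmx_sum_row; under eq_bigr do rewrite rowK scalerBr.
by rewrite sumrB scaler_suml.
Qed.

Lemma mul_row_diffmx_tail m (g : 'I_m.+1 -> V) (c : 'I_m.+1 -> K) :
  \sum_k c k = 0 -> (\row_i c (lift ord0 i)) *m diffmx g = \sum_k c k *: g k.
Proof.
move=> c0; have c0E : c ord0 = - \sum_i c (lift ord0 i).
  by apply/eqP; rewrite -addr_eq0 -big_ord_recl c0.
rewrite mul_row_diffmx big_ord_recl c0E.
under eq_bigr do rewrite mxE; under [X in _ - X *: _]eq_bigr do rewrite mxE.
by rewrite scaleNr addrC.
Qed.

Lemma affine_free_row_free m (g : 'I_m.+1 -> V) : affine_free g -> row_free (diffmx g).
Proof.
move=> free; apply: inj_row_free => b bg0.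
pose c k := if unlift ord0 k is Some i then b 0 i else - \sum_i b 0 i.
have cl i : c (lift ord0 i) = b 0 i by rewrite /c liftK.
have c0 : \sum_k c k = 0.
  rewrite big_ord_recl; under eq_bigr do rewrite cl.
  by rewrite /c unlift_none addNr.
have bE : b = \row_i c (lift ord0 i) by apply/rowP => i; rewrite mxE cl.
have cg : \sum_k c k *: g k = 0 by rewrite -mul_row_diffmx_tail // -bE bg0.
by apply/rowP => i; rewrite mxE -cl free.
Qed.

Lemma affine_free_card_le m (g : 'I_m.+1 -> V) : affine_free g -> (m <= d)%N.
Proof. by move/affine_free_row_free/eqP <-; exact: rank_leq_col. Qed.

Lemma supnorm_ge (v : V) j : `|v 0 j| <= supnorm v.
Proof. by rewrite /supnorm (bigD1 j) //= le_max lexx. Qed.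

Lemma supnorm_ge0 (v : V) : 0 <= supnorm v.
Proof. by rewrite /supnorm; elim/big_ind: _ => // a b a0 b0; rewrite le_max a0. Qed.

Lemma supnorm_le (v : V) r : 0 <= r -> (forall j, `|v 0 j| <= r) -> supnorm v <= r.
Proof. by move=> r0 vr; rewrite /supnorm; elim/big_ind: _ => // a b ar br; rewrite ge_max ar. Qed.

Lemma supnormZ (a : K) (v : V) : supnorm (a *: v) <= `|a| * supnorm v.
Proof.
apply: supnorm_le => [|j]; first by rewrite mulr_ge0 ?supnorm_ge0.
by rewrite mxE normrM ler_wpM2l ?supnorm_ge.
Qed.

(* The tail of [c] is recovered from the combination through a left inverse of
   [diffmx g], and its head is minus the sum of the tail. *)
Lemma affine_free_coef_bound m (g : 'I_m.+1 -> V) : affine_free g ->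
  exists D, 0 < D /\ forall c : 'I_m.+1 -> K, \sum_k c k = 0 ->
    forall k, `|c k| <= supnorm (\sum_k c k *: g k) * D.
Proof.
move=> /affine_free_row_free/row_freeP [B diffB].
set C := \sum_i \sum_j `|B j i|.
have C_ge0 : 0 <= C by do 2!apply: sumr_ge0 => ? _; rewrite normr_ge0.
exists (C *+ m.+1 + 1); split; first by rewrite ltr_wpDl ?mulrn_wge0.
move=> c c0; set v := \sum_k c k *: g k; have v_ge0 := supnorm_ge0 v.
have tail_le i : `|c (lift ord0 i)| <= supnorm v * C.
  have -> : c (lift ord0 i) = (v *m B) 0 i.
    by rewrite /v -mul_row_diffmx_tail // -mulmxA diffB mulmx1 mxE.
  rewrite mxE; apply: le_trans (ler_norm_sum _ _ _) _.
  apply: le_trans (_ : \sum_j supnorm v * `|B j i| <= _).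
    by apply: ler_sum => j _; rewrite normrM ler_wpM2r ?supnorm_ge.
  rewrite -mulr_sumr ler_wpM2l // /C (bigD1 i) //= lerDl.
  by do 2!apply: sumr_ge0 => ? _; rewrite normr_ge0.
have CD : (supnorm v * C) *+ m.+1 <= supnorm v * (C *+ m.+1 + 1).
  by rewrite mulrDr mulr1 mulrnAr lerDl.
move=> k; apply: le_trans CD; case: (unliftP ord0 k) => [i ->|->].
  by apply: le_trans (tail_le i) _; rewrite mulrS lerDl mulrn_wge0 ?mulr_ge0.
have c0E : c ord0 = - \sum_i c (lift ord0 i).
  by apply/eqP; rewrite -addr_eq0 -big_ord_recl c0.
rewrite c0E normrN mulrS; apply: le_trans (ler_norm_sum _ _ _) _.
apply: le_trans (_ : \sum_(i < m) supnorm v * C <= _); first exact: ler_sum.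
by rewrite sumr_const card_ord lerDr mulr_ge0.
Qed.

Lemma sum_scale_comb n N (l : 'I_n -> K) (a : 'I_n -> 'I_N -> K) (g : 'I_N -> V) :
  \sum_t l t *: \sum_k a t k *: g k = \sum_k (\sum_t l t * a t k) *: g k.
Proof.
under eq_bigr do rewrite scaler_sumr; rewrite exchange_big.
by apply: eq_bigr => k _; rewrite scaler_suml; apply: eq_bigr => t _; rewrite scalerA.
Qed.

Lemma sum_mul_sum n N (l : 'I_n -> K) (a : 'I_n -> 'I_N -> K) :
  \sum_k \sum_t l t * a t k = \sum_t l t * \sum_k a t k.
Proof. by rewrite exchange_big; apply: eq_bigr => t _; rewrite mulr_sumr. Qed.

Section HullOfFamily.
Variables (N : nat) (g : 'I_N -> V) (Q : V -> Prop).
Hypothesis Q_g : forall z, Q z -> exists k, z = g k.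

Lemma conv_family_comb w : conv Q w ->
  exists a : 'I_N -> K, [/\ (forall k, 0 <= a k), \sum_k a k = 1 &
    w = \sum_k a k *: g k].
Proof.
move=> [n [x [l [Qx [l_ge0 [l1 wE]]]]]].
have /fin_all_exists [kk kkE] t : exists k, x t = g k by exact: Q_g.
exists (fun k => \sum_(t | kk t == k) l t); split.
- by move=> k; apply: sumr_ge0 => t _.
- by rewrite -l1 [RHS](partition_big kk xpredT).
under eq_bigr do rewrite scaler_suml.
rewrite wE (partition_big kk xpredT) //=.
by apply: eq_bigr => k _; apply: eq_bigr => t /eqP <-; rewrite kkE.
Qed.

Lemma aff_conv_family_comb z : aff (conv Q) z ->
  exists a : 'I_N -> K, \sum_k a k = 1 /\ z = \sum_k a k *: g k.
Proof.
move=> [n [x [l [convx [l1 zE]]]]].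
have /fin_all_exists [a aP] t : exists a : 'I_N -> K,
    [/\ (forall k, 0 <= a k), \sum_k a k = 1 & x t = \sum_k a k *: g k].
  exact: conv_family_comb.
exists (fun k => \sum_t l t * a t k); split.
  have a1 t : \sum_k a t k = 1 by case: (aP t).
  by rewrite sum_mul_sum; under eq_bigr do rewrite a1 mulr1.
by rewrite -sum_scale_comb zE; apply: eq_bigr => t _; case: (aP t) => _ _ <-.
Qed.

End HullOfFamily.

Lemma relint_conv_affine_free m (g : 'I_m.+1 -> V) (Q : V -> Prop) mu y :
  affine_free g -> (forall z, Q z -> exists k, z = g k) -> (forall k, Q (g k)) ->
  (forall k, 0 < mu k) -> \sum_k mu k = 1 -> y = \sum_k mu k *: g k ->
  relint (conv Q) y.
Proof.
move=> free Q_g g_Q mu_gt0 mu1 yE; split.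
  by exists m.+1, g, mu; split=> //; split=> [k|//]; exact: ltW.
have [D [D_gt0 coefD]] := affine_free_coef_bound free.
have [k0 _ k0min] := @arg_minP _ K _ ord0 xpredT mu isT.
exists (mu k0 / D); split=> [|z /(aff_conv_family_comb Q_g) [a [a1 zE]] zy_lt].
  by rewrite divr_gt0.
exists m.+1, g, a; split=> //; split=> [k|//].
have da0 : \sum_k (a k - mu k) = 0 by rewrite sumrB a1 mu1 subrr.
have daE : \sum_k (a k - mu k) *: g k = z - y.
  by rewrite zE yE -sumrB; apply: eq_bigr => i _; rewrite scalerBl.
have : `|a k - mu k| < mu k.
  apply: le_lt_trans (coefD _ da0 k) _; rewrite daE.
  by apply: lt_le_trans (k0min k isT); rewrite -ltr_pdivlMr.
by rewrite ltr_norml ltrBrDl subrr => /andP [/ltW].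
Qed.

Lemma aff_indep_codom m (g : 'I_m -> V) : affine_free g -> aff_indep (codom g).
Proof.
rewrite /aff_indep codomE size_map size_enum_ord => free c c0 cg.
apply: free c0 _; rewrite -[RHS]cg; apply: eq_bigr => i _.
by rewrite (nth_map i) ?size_enum_ord // nth_ord_enum.
Qed.

Lemma relint_push (C : V -> Prop) y x : relint C y -> C x ->
  exists t, 0 < t /\ C ((1 + t) *: y - t *: x).
Proof.
move=> [Cy [eps [eps_gt0 nearC]]] Cx.
set r := supnorm (y - x) + 1.
have r_gt0 : 0 < r by rewrite ltr_wpDl ?supnorm_ge0.
exists (eps / r); split; first by rewrite divr_gt0.
set t := eps / r; have t_gt0 : 0 < t by rewrite divr_gt0.
apply: nearC.
  exists 2%N, (fun i : 'I_2 => [:: y; x]`_i), (fun i : 'I_2 => [:: 1 + t; - t]`_i).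
  split; first by case=> -[|[|]].
  by rewrite !big_ord_recl !big_ord0 /= !addr0 addrK scaleNr.
have -> : (1 + t) *: y - t *: x - y = t *: (y - x).
  by rewrite scalerDl scale1r scalerBr addrAC [y + _]addrC addrK.
apply: le_lt_trans (supnormZ _ _) _; rewrite gtr0_norm //.
have <- : t * r = eps by rewrite /t divfK ?gt_eqF.
by rewrite ltr_pM2l // ltrDl.
Qed.

(* From [z = (1 + t) y - t x] we get [y = z / (1 + t) + (t / (1 + t)) x]. *)
Lemma conv_anchored_comb (R : V -> Prop) y x t : 0 < t -> R x ->
  conv R ((1 + t) *: y - t *: x) ->
  exists n (f : 'I_n.+1 -> V) w,
    [/\ (forall i, R (f i)), f ord0 = x & anchored_comb y f w].
Proof.
move=> t_gt0 Rx [n [h [nu [Rh [nu_ge0 [nu1 zE]]]]]].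
have t1_gt0 : 0 < 1 + t by rewrite addr_gt0.
pose f k := if unlift ord0 k is Some i then h i else x.
pose w k := if unlift ord0 k is Some i then nu i / (1 + t) else t / (1 + t).
have fl i : f (lift ord0 i) = h i by rewrite /f liftK.
have wl i : w (lift ord0 i) = nu i / (1 + t) by rewrite /w liftK.
have f0 : f ord0 = x by rewrite /f unlift_none.
have w0 : w ord0 = t / (1 + t) by rewrite /w unlift_none.
exists n, f, w; split=> //.
  by move=> k; case: (unliftP ord0 k) => [i|] ->; rewrite ?fl ?f0.
split.
- by move=> k; case: (unliftP ord0 k) => [i|] ->; rewrite ?wl ?w0 divr_ge0 ?nu_ge0 ?ltW.
- by rewrite w0 divr_gt0.
- rewrite big_ord_recl w0 addrC; under eq_bigr do rewrite wl.
  by rewrite -mulr_suml nu1 -mulrDl divff ?gt_eqF.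
rewrite big_ord_recl f0 w0 addrC; under eq_bigr do rewrite wl fl mulrC -scalerA.
rewrite -scaler_sumr -zE scalerBr !scalerA mulVf ?gt_eqF // scale1r.
by rewrite [_^-1 * t]mulrC subrK.
Qed.

End AffineFamilies.

Theorem lemma2 (K : realFieldType) (d : nat) (R : 'rV[K]_d -> Prop)
  (y : 'rV[K]_d) (hy : relint (conv R) y) (x : 'rV[K]_d) (hx : R x) :
  exists s : seq 'rV[K]_d,
    [/\ uniq s, (forall z, z \in s -> R z), aff_indep s,
        (size s <= d.+1)%N &
        (x \in s /\ relint (conv (fun z => z \in s)) y)].
Proof.
have convRx : conv R x.
  exists 1%N, (fun=> x), (fun=> 1); split=> //; split=> [_|]; first exact: ler01.
  by rewrite !big_ord1 scale1r.
have [t [t_gt0 convRz]] := relint_push hy convRx.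
have [n [f [w [Rf f0 hw]]]] := conv_anchored_comb t_gt0 hx convRz.
have [m [g [mu [Rg g0 free mu_gt0 [mu1 yE]]]]] := caratheodory_anchored Rf hw.
exists (codom g); split.
- by rewrite codomE map_inj_uniq ?enum_uniq //; exact: affine_free_inj.
- by move=> z /codomP [k ->].
- exact: aff_indep_codom.
- by rewrite size_codom card_ord ltnS (affine_free_card_le free).
split; first by rewrite -f0 -g0 codom_f.
by apply: relint_conv_affine_free free _ _ mu_gt0 mu1 yE => [z /codomP|k]; rewrite ?codom_f.
Qed.
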